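(* Let $\mathcal{S}=\{S_t\}_{t=1}^T$ be a temporal feedback graph with $K\ge 2$ actions, let $C_1,\dots,C_N$ be its maximal orders, and let $\mathsf{UB}(\mathcal{S})$ be the optimal value of the upper bound program. If Algorithm 1 (described in the context) is run with an optimal solution $\boldsymbol\lambda^*$ of the upper bound program, then its worst-case regret is at most $O(\mathsf{UB}(\mathcal{S})\sqrt{\log K})$.
   Context: Setting: $T$ rounds, action set $\Delta_K$ (probability distributions over $[K]$), loss vectors $\ell_t\in[0,1]^K$. A temporal feedback graph $\mathcal{S}$ is a collection of subsets $S_t\subseteq[T]\setminus\{t\}$, $t\in[T]$; $S_t$ is the set of rounds whose losses are visible at round $t$. An $\mathcal{S}$-learning algorithm is a collection of functions $A_t$ mapping the losses $(\ell_s)_{s\in S_t}$ to an action $x_t\in\Delta_K$. Its regret on a loss sequence $\boldsymbol\ell=(\ell_1,\dots,\ell_T)$ is $\mathrm{Reg}(\mathcal{A},\boldsymbol\ell)=\sum_{t=1}^T\langle x_t,\ell_t\rangle-\min_{x^*\in\Delta_K}\sum_{t=1}^T\langle x^*,\ell_t\rangle$, and its worst-case regret is $\mathrm{Reg}(\mathcal{A})=\max_{\boldsymbol\ell\in([0,1]^K)^T}\mathrm{Reg}(\mathcal{A},\boldsymbol\ell)$. A sequence of rounds $t_1,\dots,t_w$ is an order if $t_u\in S_{t_v}$ for all $u<v$; it is maximal if no super-sequence of it is an order. Let $C_1,\dots,C_N$ be all maximal orders. The upper bound program is: minimize $\sum_{c=1}^N\sqrt{\sum_{t\in C_c}\lambda_{c,t}^2}$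 subject to $\sum_{c=1}^N\lambda_{c,t}=1$ for all $t\in[T]$, $\lambda_{c,t}=0$ if $t\notin C_c$, and $\lambda_{c,t}\ge 0$; $\mathsf{UB}(\mathcal{S})$ denotes its optimal value. Algorithm 1 (input: a feasible $\boldsymbol\lambda$ for the upper bound program): for each $c$ set $\eta_c=\sqrt{(\log K)/\sum_{t\in C_c}\lambda_{c,t}^2}$. At round $t$, for each order $C_c$ containing $t$, let $t_1,\dots,t_w=t$ be the prefix of $C_c$ up to and including $t$ and define $x^{(c)}_t\in\Delta_K$ by $x^{(c)}_{t,i}=\exp(-\eta_c\sum_{u=1}^{w-1}\lambda_{c,t_u}\ell_{t_u,i})/\sum_{j=1}^K\exp(-\eta_c\sum_{u=1}^{w-1}\lambda_{c,t_u}\ell_{t_u,j})$; play $x_t=\sum_{c:\,t\in C_c}\lambda_{c,t}x^{(c)}_t$. *)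

From HB Require Import structures.
From mathcomp Require Import all_boot all_order all_algebra.
From mathcomp Require Import all_classical all_reals all_analysis.
Set Implicit Arguments. Unset Strict Implicit. Unset Printing Implicit Defensive.
Import Order.TTheory GRing.Theory Num.Theory.
Local Open Scope ring_scope.

(* Rounds are 'I_T (paper's round t+1 is t : 'I_T); actions are 'I_K.
   A temporal feedback graph is S : 'I_T -> {set 'I_T} with t \notin S t. *)
Definition temporal_feedback_graph (T : nat) (S : 'I_T -> {set 'I_T}) : Prop :=
  forall t : 'I_T, t \notin S t.

Definition is_order (T : nat) (S : 'I_T -> {set 'I_T}) (s : seq 'I_T) : Prop :=
  pairwise (fun a b => a \in S b) s.

Definition is_maximal_order (T : nat) (S : 'I_T -> {set 'I_T}) (s : seq 'I_T) : Prop :=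
  is_order S s /\ (forall s' : seq 'I_T, subseq s s' -> is_order S s' -> s' = s).

Definition enumerates_maximal_orders (T N : nat) (S : 'I_T -> {set 'I_T})
    (C : 'I_N -> seq 'I_T) : Prop :=
  injective C /\ (forall s, is_maximal_order S s <-> exists c, C c = s).

Section Program.
Variables (R : realType) (T N : nat) (C : 'I_N -> seq 'I_T).

Definition ub_feasible (lam : 'I_N -> 'I_T -> R) : Prop :=
  [/\ forall t, \sum_(c < N) lam c t = 1,
      forall c t, t \notin C c -> lam c t = 0
    & forall c t, 0 <= lam c t].

Definition ub_objective (lam : 'I_N -> 'I_T -> R) : R :=
  \sum_(c < N) Num.sqrt (\sum_(t | t \in C c) lam c t ^+ 2).

Definition UB : R := inf [set ub_objective lam | lam in ub_feasible].

Definition ub_optimal (lam : 'I_N -> 'I_T -> R) : Prop :=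
  ub_feasible lam /\ forall lam', ub_feasible lam' -> ub_objective lam <= ub_objective lam'.

End Program.

Section Algo.
Variables (R : realType) (T N K : nat) (C : 'I_N -> seq 'I_T)
  (lam : 'I_N -> 'I_T -> R).

Definition eta (c : 'I_N) : R :=
  Num.sqrt (ln (K%:R : R) / \sum_(t | t \in C c) lam c t ^+ 2).

Definition prefix_before (c : 'I_N) (t : 'I_T) : seq 'I_T :=
  take (index t (C c)) (C c).

Definition weight (loss : 'I_T -> 'I_K -> R) (c : 'I_N) (t : 'I_T) (i : 'I_K) : R :=
  expR (- eta c * \sum_(u <- prefix_before c t) lam c u * loss u i).

Definition expert_action (loss : 'I_T -> 'I_K -> R) (c : 'I_N) (t : 'I_T) (i : 'I_K) : R :=
  weight loss c t i / \sum_(j < K) weight loss c t j.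

Definition alg1_action (loss : 'I_T -> 'I_K -> R) (t : 'I_T) (i : 'I_K) : R :=
  \sum_(c < N | t \in C c) lam c t * expert_action loss c t i.

End Algo.

Definition in_simplex (R : realType) (K : nat) (x : 'I_K -> R) : Prop :=
  (forall i, 0 <= x i) /\ \sum_(i < K) x i = 1.

Definition loss_seq (R : realType) (T K : nat) (loss : 'I_T -> 'I_K -> R) : Prop :=
  forall t i, 0 <= loss t i <= 1.

Definition regret_against (R : realType) (T K : nat) (x : 'I_T -> 'I_K -> R)
    (loss : 'I_T -> 'I_K -> R) (xstar : 'I_K -> R) : R :=
  \sum_(t < T) \sum_(i < K) x t i * loss t i
  - \sum_(t < T) \sum_(i < K) xstar i * loss t i.

From mathcomp Require Import all_boot all_order all_algebra.
From mathcomp Require Import all_classical all_reals all_analysis.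
From mathcomp Require Import ring lra.
Set Implicit Arguments. Unset Strict Implicit. Unset Printing Implicit Defensive.
Import Order.TTheory GRing.Theory Num.Theory.
Local Open Scope ring_scope.

(* Each maximal order C_c runs exponential weights on its own rounds against the
   losses lam_{c,t} l_t, with a learning rate tuned to the norm ||lam_c||_2; the
   potential argument bounds the regret of this expert by 2 sqrt(log K) ||lam_c||_2.
   As sum_c lam_{c,t} = 1, the regret of Algorithm 1 is the sum of these per-order
   regrets, hence at most 2 sqrt(log K) times the objective at lam, which is UB(S)
   when lam is optimal. *)

Lemma expRN_le (R : realType) (y : R) : 0 <= y -> expR (- y) <= 1 - y + y ^+ 2.
Proof.
move=> y_ge0; rewrite expRN -[_^-1]mul1r ler_pdivrMr ?expR_gt0 //.
have q_ge0 : 0 <= 1 - y + y ^+ 2 by nra.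
apply: le_trans (ler_wpM2l q_ge0 (expR_ge1Dx y)).
have -> : (1 - y + y ^+ 2) * (1 + y) = 1 + y ^+ 3 by ring.
by rewrite lerDl exprn_ge0.
Qed.

Section Hedge.
Variables (R : realType) (K : nat) (g : nat -> 'I_K -> R) (b : nat -> R) (et : R).
Hypotheses (K_gt0 : (0 < K)%N) (et_ge0 : 0 <= et).
Hypothesis g_bounded : forall k i, 0 <= g k i <= b k.

Definition cum_loss k i := \sum_(j < k) g j i.
Definition potential k := \sum_(i < K) expR (- et * cum_loss k i).
Definition hedge k i := expR (- et * cum_loss k i) / potential k.
Definition hedge_loss k := \sum_(i < K) hedge k i * g k i.

Lemma potential_gt0 k : 0 < potential k.
Proof.
rewrite /potential (bigD1 (Ordinal K_gt0)) //= ltr_pwDl ?expR_gt0 //.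
by rewrite sumr_ge0 // => i _; rewrite expR_ge0.
Qed.

Lemma potential_succ_le k :
  potential k.+1 <= potential k * expR (- et * hedge_loss k + et ^+ 2 * b k ^+ 2).
Proof.
have potential_k_gt0 := potential_gt0 k.
have weight_succ i :
    expR (- et * cum_loss k.+1 i) = expR (- et * cum_loss k i) * expR (- (et * g k i)).
  by rewrite -expRD /cum_loss big_ord_recr /=; congr expR; ring.
have weighted_loss :
    \sum_(i < K) expR (- et * cum_loss k i) * g k i = potential k * hedge_loss k.
  rewrite /hedge_loss big_distrr /=; apply: eq_bigr => i _.
  by rewrite /hedge mulrA mulrCA divff ?mulr1 // gt_eqF.
apply: (@le_trans _ _ (\sum_(i < K)
    expR (- et * cum_loss k i) * (1 - et * g k i + et ^+ 2 * b k ^+ 2))).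
  apply: ler_sum => i _; rewrite weight_succ ler_wpM2l ?expR_ge0 //.
  have /andP [g_ge0 g_le_b] := g_bounded k i.
  apply: le_trans (expRN_le (mulr_ge0 et_ge0 g_ge0)) _.
  rewrite lerD2l exprMn ler_wpM2l ?exprn_ge0 //.
  by rewrite ler_sqr ?nnegrE //; apply: le_trans g_le_b.
have -> : \sum_(i < K) expR (- et * cum_loss k i) * (1 - et * g k i + et ^+ 2 * b k ^+ 2)
    = potential k * (1 - et * hedge_loss k + et ^+ 2 * b k ^+ 2).
  under eq_bigr => i _ do rewrite mulrDr mulrBr mulr1 mulrCA.
  rewrite big_split sumrB /= -mulr_sumr -mulr_suml weighted_loss -/(potential k).
  ring.
by rewrite ler_pM2l // mulNr -addrA expR_ge1Dx.
Qed.

Lemma potential_le n :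
  potential n <= K%:R * expR (\sum_(k < n) (- et * hedge_loss k + et ^+ 2 * b k ^+ 2)).
Proof.
elim: n => [|n IHn].
  rewrite big_ord0 expR0 mulr1 /potential /cum_loss.
  under eq_bigr => i _ do rewrite big_ord0 mulr0 expR0.
  by rewrite sumr_const card_ord.
apply: le_trans (potential_succ_le n) _.
by rewrite big_ord_recr /= (expRD (\sum_(k < n) _)) mulrA ler_wpM2r ?expR_ge0.
Qed.

Lemma expR_mixed_loss_le_potential n (xs : 'I_K -> R) : in_simplex xs ->
  expR (- et * \sum_(i < K) xs i * cum_loss n i) <= potential n.
Proof.
move=> [xs_ge0 xs_sum1].
have [i0 _ min_i0] := arg_minP (cum_loss n) (isT : predT (Ordinal K_gt0)).
apply: (@le_trans _ _ (expR (- et * cum_loss n i0))).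
  rewrite ler_expR !mulNr lerN2 ler_wpM2l // -[leLHS]mul1r -xs_sum1 mulr_suml.
  by apply: ler_sum => i _; rewrite ler_wpM2l ?min_i0.
rewrite /potential (bigD1 i0) //= lerDl.
by rewrite sumr_ge0 // => i _; rewrite expR_ge0.
Qed.

Lemma hedge_regret_scaled n (xs : 'I_K -> R) : in_simplex xs ->
  et * (\sum_(k < n) hedge_loss k - \sum_(i < K) xs i * cum_loss n i)
  <= ln K%:R + et ^+ 2 * \sum_(k < n) b k ^+ 2.
Proof.
move=> xs_simplex.
have K_pos : (K%:R : R) \in Num.pos by rewrite posrE ltr0n.
have := le_trans (expR_mixed_loss_le_potential n xs_simplex) (potential_le n).
rewrite -{1}(lnK K_pos) -expRD ler_expR big_split /= -!mulr_sumr.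
lra.
Qed.
End Hedge.

Lemma hedge_regret_le (R : realType) (K n : nat) (g : nat -> 'I_K -> R) (b : nat -> R)
    (xs : 'I_K -> R) :
  (1 < K)%N -> (forall k i, 0 <= g k i <= b k) -> in_simplex xs ->
  \sum_(k < n) hedge_loss g (Num.sqrt (ln K%:R / \sum_(k < n) b k ^+ 2)) k
    - \sum_(i < K) xs i * cum_loss g n i
  <= 2 * Num.sqrt (ln K%:R) * Num.sqrt (\sum_(k < n) b k ^+ 2).
Proof.
move=> K_gt1 g_bounded xs_simplex.
have lnK_gt0 : 0 < ln (K%:R : R) by rewrite ln_gt0 // ltr1n.
have rhs_ge0 : 0 <= 2 * Num.sqrt (ln (K%:R : R)) * Num.sqrt (\sum_(k < n) b k ^+ 2).
  by rewrite !mulr_ge0 ?sqrtr_ge0.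
set B := \sum_(k < n) b k ^+ 2 in rhs_ge0 *.
set et := Num.sqrt (ln K%:R / B).
have [B_eq0 | B_neq0] := eqVneq B 0.
  have b_eq0 (k : 'I_n) : b k = 0.
    apply/eqP; rewrite -sqrf_eq0; apply/eqP/(psumr_eq0P _ B_eq0) => // j _.
    exact: sqr_ge0.
  have g_eq0 (k : 'I_n) i : g k i = 0.
    by have := g_bounded k i; rewrite b_eq0 => /andP [g_ge0 g_le0]; apply/le_anti/andP.
  rewrite big1 => [|k _]; last by rewrite /hedge_loss big1 // => i _; rewrite g_eq0 mulr0.
  rewrite big1 ?subr0 // => i _.
  by rewrite /cum_loss big1 ?mulr0 // => k _; rewrite g_eq0.
have B_gt0 : 0 < B by rewrite lt_def B_neq0 sumr_ge0 // => k _; rewrite sqr_ge0.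
have et_gt0 : 0 < et by rewrite sqrtr_gt0 divr_gt0.
have et_sq : et ^+ 2 = ln K%:R / B by rewrite sqr_sqrtr // ltW // divr_gt0.
have et_sqrtB : et * Num.sqrt B = Num.sqrt (ln K%:R).
  by rewrite -sqrtrM ?divfK // ?gt_eqF // divr_ge0 // ltW.
have := hedge_regret_scaled (ltnW K_gt1) (ltW et_gt0) g_bounded n xs_simplex.
rewrite et_sq divfK ?gt_eqF // => scaled_regret.
rewrite -(ler_pM2l et_gt0); apply: le_trans scaled_regret _.
rewrite mulrCA et_sqrtB -mulrA -expr2 sqr_sqrtr ?(ltW lnK_gt0) //.
lra.
Qed.

Lemma big_mem_uniq_nth (V : nmodType) (T : finType) (s : seq T) (x0 : T) (F : T -> V) :
  uniq s -> \sum_(t | t \in s) F t = \sum_(k < size s) F (nth x0 s k).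
Proof. by move=> s_uniq; rewrite -big_uniq // (big_nth x0) big_mkord. Qed.

Section OrderExpert.
Variables (R : realType) (T N K : nat) (C : 'I_N -> seq 'I_T) (lam : 'I_N -> 'I_T -> R).
Variables (loss : 'I_T -> 'I_K -> R) (c : 'I_N) (x0 : 'I_T).
Hypothesis C_uniq : uniq (C c).

Definition order_loss k i := lam c (nth x0 (C c) k) * loss (nth x0 (C c) k) i.

Lemma expert_action_nth k i : (k < size (C c))%N ->
  expert_action C lam loss c (nth x0 (C c) k) i = hedge order_loss (eta K C lam c) k i.
Proof.
move=> k_lt.
have prefix_loss j : \sum_(u <- prefix_before C c (nth x0 (C c) k)) lam c u * loss u j
    = cum_loss order_loss k j.
  rewrite /prefix_before index_uniq // (big_nth x0) (size_takel (ltnW k_lt)) big_mkord.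
  by apply: eq_bigr => u _; rewrite nth_take.
rewrite /expert_action /hedge /potential /weight prefix_loss.
by under eq_bigr => j _ do rewrite prefix_loss.
Qed.

Lemma order_regret_nth (xs : 'I_K -> R) k : (k < size (C c))%N ->
  lam c (nth x0 (C c) k) *
    (\sum_(i < K) expert_action C lam loss c (nth x0 (C c) k) i * loss (nth x0 (C c) k) i
     - \sum_(i < K) xs i * loss (nth x0 (C c) k) i)
  = hedge_loss order_loss (eta K C lam c) k - \sum_(i < K) xs i * order_loss k i.
Proof.
move=> k_lt; rewrite mulrBr !big_distrr /=; congr (_ - _).
  by apply: eq_bigr => i _; rewrite expert_action_nth // /order_loss mulrCA.
by apply: eq_bigr => i _; rewrite /order_loss mulrCA.
Qed.

End OrderExpert.

Lemma expert_regret_le (R : realType) (T N K : nat) (C : 'I_N -> seq 'I_T)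
    (lam : 'I_N -> 'I_T -> R) (loss : 'I_T -> 'I_K -> R) (xs : 'I_K -> R) (c : 'I_N) :
  (1 < K)%N -> uniq (C c) -> (forall t, t \notin C c -> lam c t = 0) ->
  (forall t, 0 <= lam c t) -> loss_seq loss -> in_simplex xs ->
  \sum_(t < T) lam c t * (\sum_(i < K) expert_action C lam loss c t i * loss t i
                          - \sum_(i < K) xs i * loss t i)
  <= 2 * Num.sqrt (ln K%:R) * Num.sqrt (\sum_(t | t \in C c) lam c t ^+ 2).
Proof.
move=> K_gt1 C_uniq lam_supp lam_ge0 loss_01 xs_simplex.
have rhs_ge0 : 0 <= 2 * Num.sqrt (ln (K%:R : R)) * Num.sqrt (\sum_(t | t \in C c) lam c t ^+ 2).
  by rewrite !mulr_ge0 ?sqrtr_ge0.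
rewrite (bigID (mem (C c))) /= [X in _ + X]big1 ?addr0 => [|t /lam_supp ->]; last first.
  exact: mul0r.
have [x0 _ | T_empty] := pickP (@predT 'I_T); last first.
  by rewrite big1 // => t; have := T_empty t.
rewrite (big_mem_uniq_nth x0) // (big_mem_uniq_nth x0 (fun t => lam c t ^+ 2)) //=.
have g_bounded k i : 0 <= order_loss C lam loss c x0 k i <= lam c (nth x0 (C c) k).
  have /andP [loss_ge0 loss_le1] := loss_01 (nth x0 (C c) k) i.
  by rewrite /order_loss mulr_ge0 //= ler_piMr.
have eta_nth : eta K C lam c
    = Num.sqrt (ln K%:R / \sum_(k < size (C c)) lam c (nth x0 (C c) k) ^+ 2).
  by rewrite /eta (big_mem_uniq_nth x0).
under eq_bigr => k _ do rewrite order_regret_nth //.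
rewrite sumrB [X in _ - X <= _]exchange_big /=.
under [X in _ - X <= _]eq_bigr => i _ do rewrite -big_distrr /=.
rewrite eta_nth; exact: hedge_regret_le _ K_gt1 g_bounded xs_simplex.
Qed.

Lemma regret_alg1_decomposition (R : realType) (T N K : nat) (C : 'I_N -> seq 'I_T)
    (lam : 'I_N -> 'I_T -> R) (loss : 'I_T -> 'I_K -> R) (xs : 'I_K -> R) :
  (forall t, \sum_(c < N) lam c t = 1) -> (forall c t, t \notin C c -> lam c t = 0) ->
  regret_against (alg1_action C lam loss) loss xs
  = \sum_(c < N) \sum_(t < T) lam c t *
      (\sum_(i < K) expert_action C lam loss c t i * loss t i - \sum_(i < K) xs i * loss t i).
Proof.
move=> lam_sum1 lam_supp.
have learner_loss t : \sum_(i < K) alg1_action C lam loss t i * loss t i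
    = \sum_(c < N) lam c t * \sum_(i < K) expert_action C lam loss c t i * loss t i.
  rewrite /alg1_action; under eq_bigr => i _ do rewrite mulr_suml.
  rewrite exchange_big [RHS](bigID (fun c => t \in C c)) /= [X in _ = _ + X]big1 ?addr0.
    by apply: eq_bigr => c _; rewrite big_distrr /=; apply: eq_bigr => i _; rewrite mulrA.
  by move=> c /lam_supp ->; rewrite mul0r.
have comparator_loss t : \sum_(i < K) xs i * loss t i
    = \sum_(c < N) lam c t * \sum_(i < K) xs i * loss t i.
  by rewrite -mulr_suml lam_sum1 mul1r.
rewrite /regret_against -sumrB [RHS]exchange_big /=.
apply: eq_bigr => t _; under [RHS]eq_bigr => c _ do rewrite mulrBr.
by rewrite sumrB learner_loss -comparator_loss.
Qed.

Lemma order_uniq (T : nat) (S : 'I_T -> {set 'I_T}) (s : seq 'I_T) :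
  temporal_feedback_graph S -> is_order S s -> uniq s.
Proof. by move=> S_irr; apply: pairwise_uniq => t; apply/negbTE/S_irr. Qed.

Lemma ub_objective_le_UB (R : realType) (T N : nat) (C : 'I_N -> seq 'I_T)
    (lam : 'I_N -> 'I_T -> R) :
  ub_optimal C lam -> ub_objective C lam <= UB R C.
Proof.
move=> [lam_feasible lam_min]; apply: lb_le_inf; first by exists (ub_objective C lam), lam.
by move=> _ [lam' lam'_feasible <-]; apply: lam_min.
Qed.

Theorem theorem1 :
  exists c : nat, forall (R : realType) (T N K : nat) (S : 'I_T -> {set 'I_T})
    (C : 'I_N -> seq 'I_T) (lam : 'I_N -> 'I_T -> R),
    (2 <= K)%N ->
    temporal_feedback_graph S ->
    enumerates_maximal_orders S C ->
    ub_optimal C lam ->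
    forall (loss : 'I_T -> 'I_K -> R) (xstar : 'I_K -> R),
      loss_seq loss -> in_simplex xstar ->
      regret_against (alg1_action C lam loss) loss xstar
        <= c%:R * UB R C * Num.sqrt (ln (K%:R : R)).
Proof.
exists 2%N => R T N K S C lam K_gt1 S_irr [_ C_max] lam_opt loss xs loss_01 xs_simplex.
have [[lam_sum1 lam_supp lam_ge0] _] := lam_opt.
have C_uniq c : uniq (C c).
  have [C_order _] : is_maximal_order S (C c) by apply/C_max; exists c.
  exact: order_uniq S_irr C_order.
rewrite regret_alg1_decomposition //.
apply: le_trans (ler_sum _ (fun c _ => expert_regret_le K_gt1 (C_uniq c)
  (lam_supp c) (lam_ge0 c) loss_01 xs_simplex)) _.
rewrite -mulr_sumr mulrAC ler_wpM2r ?sqrtr_ge0 // ler_wpM2l //.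
exact: ub_objective_le_UB.
Qed.
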